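(* Let $p>1$ and $q>1$ be real numbers with $\frac1p+\frac1q=1$, and let $X,Y$ be nonnegative random variables on a common probability space with $\|X\|_p+\|Y\|_p+\|Y\|_q<\infty$. For nonnegative real numbers $A,B,C$ define $$\Delta_{p;A,B,C}(X,Y):=A+\mathbb{E}X^{p-1}Y-(\mathbb{E}X)^{p-1}\,\mathbb{E}Y-\big(B+\mathbb{E}X^p-(\mathbb{E}X)^p\big)^{1/q}\big(C+\mathbb{E}Y^p-(\mathbb{E}Y)^p\big)^{1/p},$$ and let $\Delta_p(X,Y):=\Delta_{p;0,0,0}(X,Y)$. If the nonnegative real numbers $A,B,C$ satisfy $A\le B^{1/q}C^{1/p}$, then $\Delta_{p;A,B,C}(X,Y)\le\Delta_p(X,Y)$.
   Context: $\|X\|_r:=(\mathbb{E}|X|^r)^{1/r}$. Note $\mathbb{E}X^p-(\mathbb{E}X)^p\ge0$ and $\mathbb{E}Y^p-(\mathbb{E}Y)^p\ge0$ by Lyapunov's inequality, so the expression is well defined. *)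

From HB Require Import structures.
From mathcomp Require Import all_boot all_order all_algebra.
From mathcomp Require Import all_classical all_reals all_analysis.
Set Implicit Arguments. Unset Strict Implicit. Unset Printing Implicit Defensive.
Import Order.TTheory GRing.Theory Num.Theory.
Local Open Scope ring_scope.

(* real-valued expectation: E[f] as a real number (fine of the extended-real
   expectation); used only on integrable quantities in the statement *)
Definition rE d (T : measurableType d) (R : realType) (P : probability T R)
  (f : T -> R) : R := fine ('E_P[f])%E.

Definition Delta d (T : measurableType d) (R : realType) (P : probability T R)
  (p q A B C : R) (X Y : T -> R) : R :=
  A + rE P (fun w => X w `^ (p - 1) * Y w) - (rE P X) `^ (p - 1) * rE P Y
  - (B + rE P (fun w => X w `^ p) - (rE P X) `^ p) `^ (q^-1)
    * (C + rE P (fun w => Y w `^ p) - (rE P Y) `^ p) `^ (p^-1).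

Definition Delta0 d (T : measurableType d) (R : realType) (P : probability T R)
  (p q : R) (X Y : T -> R) : R := Delta P p q 0 0 0 X Y.

(** Both excesses [E X^p - (E X)^p] and [E Y^p - (E Y)^p] are nonnegative by
    Lyapunov's inequality, which follows from Hölder's inequality against the
    constant [1].  The map [(u, v) |-> u^(1/q) v^(1/p)] is superadditive on
    nonnegative pairs (the two-term Hölder inequality), so adding [(B, C)] to the
    pair of excesses raises the product term of [Delta] by at least
    [B^(1/q) C^(1/p)], which dominates [A]. *)

From HB Require Import structures.
From mathcomp Require Import all_boot all_order all_algebra.
From mathcomp Require Import all_classical all_reals all_analysis.
From mathcomp Require Import lra.
Import Order.TTheory GRing.Theory Num.Theory.
Local Open Scope ring_scope.

Section lyapunov.
Context d (T : measurableType d) (R : realType) (P : probability T R).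

Lemma Lnorm1_le_Lnorm (f : T -> R) (p : R) : measurable_fun setT f -> 1 <= p ->
  ('N[P]_1[EFin \o f] <= 'N[P]_(p%:E)[EFin \o f])%E.
Proof.
move=> mf; rewrite le_eqVlt => /predU1P[<- //|p1].
have p0 : 0 < p by exact: lt_trans p1.
pose q := p / (p - 1).
have q0 : 0 < q by rewrite divr_gt0 // subr_gt0.
have pq : p^-1 + q^-1 = 1.
  by rewrite invf_div mulrBl divff ?gt_eqF // mul1r addrC subrK.
have := @hoelder _ _ _ P f (cst 1) p q mf (measurable_cst _) p0 q0 pq.
have PT1 : (P setT `^ q^-1 = 1)%E by rewrite probability_setT poweR1r.
rewrite Lnorm_cst1 PT1 mule1.
by under eq_Lnorm do rewrite /= mulr1.
Qed.

Lemma lyapunov (X : T -> R) (p : R) : measurable_fun setT X -> 1 <= p ->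
  (forall w, 0 <= X w) -> ('N[P]_(p%:E)[EFin \o X] < +oo)%E ->
  rE P X `^ p <= rE P (fun w => X w `^ p).
Proof.
move=> mX p1 X0 XNfin.
have p0 : 0 < p by exact: lt_le_trans p1.
have EX_N1 : ('E_P[X] = 'N[P]_1[EFin \o X])%E.
  rewrite Lnorm1 unlock; apply: eq_integral => w _ /=.
  by rewrite ger0_norm.
have EXp_N : ('E_P[fun w => (X w `^ p)%R] = 'N[P]_(p%:E)[EFin \o X] `^ p)%E.
  rewrite powR_Lnorm ?gt_eqF // unlock; apply: eq_integral => w _ /=.
  by rewrite ger0_norm.
have EX_le_N : ('E_P[X] <= 'N[P]_(p%:E)[EFin \o X])%E.
  by rewrite EX_N1; exact: Lnorm1_le_Lnorm.
have EX0 : (0 <= 'E_P[X])%E.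
  by rewrite unlock; apply: integral_ge0 => w _; rewrite lee_fin.
have N0 := Lnorm_ge0 P (p%:E) (EFin \o X).
rewrite /rE EXp_N fine_poweR ge0_ler_powR ?nnegrE ?fine_ge0 ?(ltW p0) //.
by rewrite fine_le // ge0_fin_numE // (le_lt_trans EX_le_N).
Qed.

End lyapunov.

Lemma powR_mul_superadditive {R : realType} (a1 a2 b1 b2 p q : R) :
  0 <= a1 -> 0 <= a2 -> 0 <= b1 -> 0 <= b2 ->
  0 < p -> 0 < q -> p^-1 + q^-1 = 1 ->
  a1 `^ q^-1 * b1 `^ p^-1 + a2 `^ q^-1 * b2 `^ p^-1
    <= (a1 + a2) `^ q^-1 * (b1 + b2) `^ p^-1.
Proof.
move=> a10 a20 b10 b20 p0 q0 pq.
have powRVK (x r : R) : 0 <= x -> 0 < r -> (x `^ r^-1) `^ r = x.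
  by move=> x0 r0; rewrite -powRrM mulVf ?gt_eqF // powRr1.
have := @hoelder2 R (a1 `^ q^-1) (a2 `^ q^-1) (b1 `^ p^-1) (b2 `^ p^-1) q p
  (powR_ge0 _ _) (powR_ge0 _ _) (powR_ge0 _ _) (powR_ge0 _ _) q0 p0.
by rewrite addrC !powRVK // => /(_ pq).
Qed.

Theorem lemma1 (d : measure_display) (T : measurableType d) (R : realType)
  (P : probability T R) (p q : R) (X Y : {RV P >-> R}) (A B C : R) :
  1 < p -> 1 < q -> p^-1 + q^-1 = 1 ->
  (forall w, 0 <= X w) -> (forall w, 0 <= Y w) ->
  ('N[P]_(p%:E)[EFin \o X] < +oo)%E ->
  ('N[P]_(p%:E)[EFin \o Y] < +oo)%E ->
  ('N[P]_(q%:E)[EFin \o Y] < +oo)%E ->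
  0 <= A -> 0 <= B -> 0 <= C ->
  A <= B `^ (q^-1) * C `^ (p^-1) ->
  Delta P p q A B C X Y <= Delta0 P p q X Y.
Proof.
move=> p1 q1 pq X0 Y0 XNfin YNfin _ _ B0 C0 A_le.
rewrite /Delta0 /Delta !add0r -[B + _ - _]addrA -[C + _ - _]addrA.
set a := _ - rE P X `^ p; set b := _ - rE P Y `^ p.
have a0 : 0 <= a by rewrite subr_ge0 lyapunov // ?ltW.
have b0 : 0 <= b by rewrite subr_ge0 lyapunov // ?ltW.
have p0 : 0 < p by exact: lt_trans p1.
have q0 : 0 < q by exact: lt_trans q1.
have := powR_mul_superadditive B a C b p q B0 a0 C0 b0 p0 q0 pq.
by clearbody a b; lra.
Qed.
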